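(* Let $M\ge1$ users be located at $(x_m,y_m,0)$, $1\le m\le M$, with $-\frac{D_{\rm L}}{2}\le x_m\le \frac{D_{\rm L}}{2}$ and $-\frac{D_{\rm W}}{2}\le y_m\le\frac{D_{\rm W}}{2}$, and let an antenna be placed at $(x,0,d)$, $d>0$. With $\eta>0,\sigma^2>0$ define $R_m^{\rm OMA}=\frac{1}{M}\log\left(1+\frac{\eta P_m}{\sigma^2((x-x_m)^2+y_m^2+d^2)}\right)$. For a target rate $R>0$ consider $$\min_{P_1,\dots,P_M,\ x}\ \sum_{m=1}^M P_m\quad\text{s.t.}\quad R_m^{\rm OMA}\ge R\ (1\le m\le M),\quad P_m\ge0,\quad -\frac{D_{\rm L}}{2}\le x\le\frac{D_{\rm L}}{2}.$$ Then the optimal antenna location is $x^*=\frac{1}{M}\sum_{m=1}^M x_m$ and the optimal powers are $P_m^*=\epsilon(x^*-x_m)^2+\tau_m$, $1\le m\le M$, where $\epsilon=\frac{\sigma^2}{\eta}(e^{MR}-1)$ and $\tau_m=\epsilon(y_m^2+d^2)$.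
   Context: Pinching-antenna system with a single antenna at $(x,0,d)$ on a waveguide at height $d$; users served by TDMA over $M$ slots; $\eta=\frac{c^2}{16\pi^2f_c^2}$, $\sigma^2$ is the noise power, $\log$ is the natural logarithm. *)

From Stdlib Require Import Reals.
Open Scope R_scope.

(* Sum over users m = 0 .. M-1 (paper's m = 1..M). *)
Fixpoint sum_users (M : nat) (f : nat -> R) : R :=
  match M with
  | O => 0
  | S k => sum_users k f + f k
  end.

Definition R_OMA (M : nat) (eta sigma2 d x xm ym P : R) : R :=
  / INR M * ln (1 + eta * P / (sigma2 * ((x - xm)^2 + ym^2 + d^2))).

Definition feasible (M : nat) (eta sigma2 d DL Rt : R) (xs ys : nat -> R)
  (P : nat -> R) (x : R) : Prop :=
  (forall m, (m < M)%nat -> R_OMA M eta sigma2 d x (xs m) (ys m) (P m) >= Rt) /\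
  (forall m, (m < M)%nat -> P m >= 0) /\
  - DL / 2 <= x <= DL / 2.

Definition optimal (M : nat) (eta sigma2 d DL Rt : R) (xs ys : nat -> R)
  (P : nat -> R) (x : R) : Prop :=
  feasible M eta sigma2 d DL Rt xs ys P x /\
  forall P' x', feasible M eta sigma2 d DL Rt xs ys P' x' ->
    sum_users M P <= sum_users M P'.

(* Each rate constraint is equivalent to the linear constraint
   P_m >= eps * ((x - x_m)^2 + y_m^2 + d^2), so for a fixed antenna position
   the cheapest allocation meets every constraint with equality.  Its total
   power is eps times the sum of squared distances, and the bias-variance
   identity  sum_m (x - x_m)^2 = sum_m (xbar - x_m)^2 + M (x - xbar)^2  shows
   that this is minimised exactly at the mean xbar.  Uniqueness of the powers
   follows because a feasible allocation dominates the cheapest one termwise. *)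

From Stdlib Require Import Reals Lra Lia FunctionalExtensionality.
Open Scope R_scope.

Lemma sum_users_ext M f g :
  (forall m, (m < M)%nat -> f m = g m) -> sum_users M f = sum_users M g.
Proof.
  induction M as [|M IH]; intros Hfg; simpl; [reflexivity|].
  rewrite IH by (intros; apply Hfg; lia). rewrite Hfg by lia. reflexivity.
Qed.

Lemma sum_users_le M f g :
  (forall m, (m < M)%nat -> f m <= g m) -> sum_users M f <= sum_users M g.
Proof.
  induction M as [|M IH]; intros Hfg; simpl; [lra|].
  apply Rplus_le_compat; [apply IH; intros; apply Hfg; lia | apply Hfg; lia].
Qed.

Lemma sum_users_add M f g :
  sum_users M (fun m => f m + g m) = sum_users M f + sum_users M g.
Proof. induction M as [|M IH]; simpl; [ring|]. rewrite IH. ring. Qed.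

Lemma sum_users_scal M c f : sum_users M (fun m => c * f m) = c * sum_users M f.
Proof. induction M as [|M IH]; simpl; [ring|]. rewrite IH. ring. Qed.

Lemma sum_users_const M c : sum_users M (fun _ => c) = INR M * c.
Proof. induction M as [|M IH]; cbn [sum_users]; [simpl; ring|]. rewrite IH, S_INR. ring. Qed.

Lemma sum_users_le_eq M f g :
  (forall m, (m < M)%nat -> f m <= g m) -> sum_users M g <= sum_users M f ->
  forall m, (m < M)%nat -> f m = g m.
Proof.
  induction M as [|M IH]; intros Hfg Hsum m Hm; simpl in *; [lia|].
  assert (HM : f M <= g M) by (apply Hfg; lia).
  assert (Hrest : sum_users M f <= sum_users M g)
    by (apply sum_users_le; intros; apply Hfg; lia).
  destruct (Nat.eq_dec m M) as [->|HmM]; [lra|].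
  apply IH; [intros; apply Hfg; lia | lra | lia].
Qed.

Lemma sum_users_sqr_sub M (a : nat -> R) x :
  sum_users M (fun m => (x - a m) ^ 2) =
  INR M * x ^ 2 - 2 * x * sum_users M a + sum_users M (fun m => a m ^ 2).
Proof. induction M as [|M IH]; cbn [sum_users]; [simpl; ring|]. rewrite IH, S_INR. ring. Qed.

Definition mean_users (M : nat) (a : nat -> R) : R := / INR M * sum_users M a.

Lemma mean_users_bounds M (a : nat -> R) lo hi :
  (1 <= M)%nat -> (forall m, (m < M)%nat -> lo <= a m <= hi) ->
  lo <= mean_users M a <= hi.
Proof.
  intros HM Ha. unfold mean_users.
  assert (HMpos : 0 < INR M) by (apply lt_0_INR; lia).
  pose proof (sum_users_le M (fun _ => lo) a ltac:(intros; apply Ha; lia)) as Hlo.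
  pose proof (sum_users_le M a (fun _ => hi) ltac:(intros; apply Ha; lia)) as Hhi.
  rewrite sum_users_const in Hlo, Hhi.
  split; [apply (Rmult_le_reg_l (INR M)) | apply (Rmult_le_reg_l (INR M))];
    rewrite <- ?Rmult_assoc, ?Rinv_r by lra; lra.
Qed.

Lemma sum_users_sqr_sub_mean M (a : nat -> R) x :
  (1 <= M)%nat ->
  sum_users M (fun m => (x - a m) ^ 2) =
  sum_users M (fun m => (mean_users M a - a m) ^ 2) + INR M * (x - mean_users M a) ^ 2.
Proof.
  intros HM. assert (HMpos : 0 < INR M) by (apply lt_0_INR; lia).
  rewrite !sum_users_sqr_sub. unfold mean_users. field. lra.
Qed.

Lemma le_ln_iff_exp_le y A : 0 < A -> (y <= ln A <-> exp y <= A).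
Proof.
  intros HA. rewrite <- (exp_ln A) at 2 by exact HA. split.
  - intros [Hlt | ->]; [left; apply exp_increasing, Hlt | lra].
  - intros Hexp. destruct (Rle_lt_dec y (ln A)) as [|Hlt]; [assumption|].
    pose proof (exp_increasing _ _ Hlt). lra.
Qed.

Definition sq_dist (x xm ym d : R) : R := (x - xm) ^ 2 + ym ^ 2 + d ^ 2.

Definition power_per_sq_dist (M : nat) (eta sigma2 Rt : R) : R :=
  sigma2 / eta * (exp (INR M * Rt) - 1).

Lemma sq_dist_pos x xm ym d : 0 < d -> 0 < sq_dist x xm ym d.
Proof.
  intros Hd. unfold sq_dist. pose proof (pow2_ge_0 (x - xm)). pose proof (pow2_ge_0 ym). nra.
Qed.

Lemma power_per_sq_dist_pos M eta sigma2 Rt :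
  (1 <= M)%nat -> 0 < eta -> 0 < sigma2 -> 0 < Rt -> 0 < power_per_sq_dist M eta sigma2 Rt.
Proof.
  intros HM Heta Hsigma2 HRt. unfold power_per_sq_dist.
  assert (HMpos : 0 < INR M) by (apply lt_0_INR; lia).
  assert (1 < exp (INR M * Rt)) by (rewrite <- exp_0; apply exp_increasing; nra).
  apply Rmult_lt_0_compat; [apply Rdiv_lt_0_compat|]; lra.
Qed.

Lemma R_OMA_ge_iff M eta sigma2 d x xm ym P Rt :
  (1 <= M)%nat -> 0 < d -> 0 < eta -> 0 < sigma2 -> 0 <= P ->
  R_OMA M eta sigma2 d x xm ym P >= Rt <->
  power_per_sq_dist M eta sigma2 Rt * sq_dist x xm ym d <= P.
Proof.
  intros HM Hd Heta Hsigma2 HP.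
  assert (HMpos : 0 < INR M) by (apply lt_0_INR; lia).
  pose proof (sq_dist_pos x xm ym d Hd) as HD.
  unfold R_OMA, power_per_sq_dist. fold (sq_dist x xm ym d).
  set (D := sq_dist x xm ym d) in *.
  assert (Hsnr : 0 <= eta * P / (sigma2 * D)).
  { apply Rmult_le_pos; [nra | apply Rlt_le, Rinv_0_lt_compat; nra]. }
  assert (Hscale : 0 < sigma2 * D / eta) by (apply Rdiv_lt_0_compat; nra).
  assert (HPsnr : P = sigma2 * D / eta * (eta * P / (sigma2 * D))) by (field; lra).
  transitivity (INR M * Rt <= ln (1 + eta * P / (sigma2 * D))).
  { split; intros H.
    - apply Rge_le, (Rmult_le_compat_l (INR M)) in H; [|lra].
      rewrite <- Rmult_assoc, Rinv_r, Rmult_1_l in H; lra.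
    - apply Rle_ge, (Rmult_le_reg_l (INR M)); [lra|].
      rewrite <- Rmult_assoc, Rinv_r, Rmult_1_l; lra. }
  rewrite le_ln_iff_exp_le by lra.
  replace (sigma2 / eta * (exp (INR M * Rt) - 1) * D)
    with (sigma2 * D / eta * (exp (INR M * Rt) - 1)) by (field; lra).
  rewrite HPsnr at 2. split; intros H.
  - apply Rmult_le_compat_l; lra.
  - apply Rmult_le_reg_l in H; lra.
Qed.

Section Power_minimisation.

Variables (M : nat) (eta sigma2 d DL Rt : R) (xs ys : nat -> R).
Hypotheses (HM : (1 <= M)%nat) (Hd : 0 < d) (Heta : 0 < eta) (Hsigma2 : 0 < sigma2)
  (HRt : 0 < Rt) (Hxs : forall m, (m < M)%nat -> - DL / 2 <= xs m <= DL / 2).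

Let eps := power_per_sq_dist M eta sigma2 Rt.

Definition min_power (x : R) (m : nat) : R := eps * sq_dist x (xs m) (ys m) d.

Fact eps_mul_users_pos : 0 < eps * INR M.
Proof.
  apply Rmult_lt_0_compat; [apply power_per_sq_dist_pos | apply lt_0_INR; lia]; assumption.
Qed.

Lemma feasible_ge_min_power P x :
  feasible M eta sigma2 d DL Rt xs ys P x ->
  forall m, (m < M)%nat -> min_power x m <= P m.
Proof.
  intros [Hrate [HP _]] m Hm.
  apply (R_OMA_ge_iff M eta sigma2 d x (xs m) (ys m)); auto using Rge_le.
Qed.

Lemma feasible_min_power x :
  - DL / 2 <= x <= DL / 2 -> feasible M eta sigma2 d DL Rt xs ys (min_power x) x.
Proof.
  intros Hx.
  assert (Hmin : forall m, 0 <= min_power x m).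
  { intros m. apply Rmult_le_pos; apply Rlt_le;
      [apply power_per_sq_dist_pos | apply sq_dist_pos]; assumption. }
  split; [|split; [intros m _; apply Rle_ge, Hmin | exact Hx]].
  intros m Hm. apply R_OMA_ge_iff; auto using Rle_refl.
Qed.

Lemma sum_min_power x :
  sum_users M (min_power x) =
  sum_users M (min_power (mean_users M xs)) + eps * INR M * (x - mean_users M xs) ^ 2.
Proof.
  assert (Hexpand : forall y, sum_users M (min_power y) =
    eps * (sum_users M (fun m => (y - xs m) ^ 2) +
           sum_users M (fun m => ys m ^ 2 + d ^ 2))).
  { intros y. rewrite <- sum_users_add, <- sum_users_scal.
    apply sum_users_ext. intros m _. unfold min_power, sq_dist. ring. }
  rewrite !Hexpand, (sum_users_sqr_sub_mean M xs x HM). ring.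
Qed.

Lemma min_power_at_mean_optimal :
  optimal M eta sigma2 d DL Rt xs ys (min_power (mean_users M xs)) (mean_users M xs).
Proof.
  split; [apply feasible_min_power, mean_users_bounds; assumption|].
  intros P x Hfeas.
  assert (Hpen : 0 <= eps * INR M * (x - mean_users M xs) ^ 2)
    by (apply Rmult_le_pos; [apply Rlt_le, eps_mul_users_pos | apply pow2_ge_0]).
  pose proof (sum_min_power x) as Hsum.
  pose proof (sum_users_le M _ _ (feasible_ge_min_power P x Hfeas)).
  lra.
Qed.

Lemma optimal_eq_min_power_at_mean P x :
  optimal M eta sigma2 d DL Rt xs ys P x ->
  x = mean_users M xs /\ forall m, (m < M)%nat -> P m = min_power (mean_users M xs) m.
Proof.
  intros [Hfeas Hopt].
  pose proof (feasible_ge_min_power P x Hfeas) as Hge.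
  assert (Hle : sum_users M P <= sum_users M (min_power (mean_users M xs)))
    by (apply (Hopt _ (mean_users M xs)), feasible_min_power, mean_users_bounds; assumption).
  pose proof (sum_min_power x) as Hsum.
  pose proof (sum_users_le M _ _ Hge).
  assert (Hx : x = mean_users M xs).
  { pose proof eps_mul_users_pos.
    pose proof (pow2_ge_0 (x - mean_users M xs)).
    assert ((x - mean_users M xs) ^ 2 = 0) by nra.
    nra. }
  subst x. split; [reflexivity|].
  intros m Hm. symmetry. apply (sum_users_le_eq M _ _ Hge); [lra | exact Hm].
Qed.

End Power_minimisation.

Theorem corollary1 (M : nat) (DL DW d eta sigma2 Rt : R) (xs ys : nat -> R) :
  (1 <= M)%nat ->
  (forall m, (m < M)%nat -> - DL / 2 <= xs m <= DL / 2) ->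
  (forall m, (m < M)%nat -> - DW / 2 <= ys m <= DW / 2) ->
  0 < d -> 0 < eta -> 0 < sigma2 -> 0 < Rt ->
  let xstar := / INR M * sum_users M xs in
  let eps := sigma2 / eta * (exp (INR M * Rt) - 1) in
  let tau := fun m => eps * (ys m ^ 2 + d ^ 2) in
  let Pstar := fun m => eps * (xstar - xs m) ^ 2 + tau m in
  optimal M eta sigma2 d DL Rt xs ys Pstar xstar /\
  (forall P x, optimal M eta sigma2 d DL Rt xs ys P x ->
     x = xstar /\ forall m, (m < M)%nat -> P m = Pstar m).
Proof.
  intros HM Hxs _ Hd Heta Hsigma2 HRt xstar eps tau Pstar.
  change xstar with (mean_users M xs).
  assert (HPstar : Pstar = min_power M eta sigma2 d Rt xs ys (mean_users M xs)).
  { apply functional_extensionality. intros m.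
    unfold Pstar, tau, eps, xstar, min_power, mean_users, power_per_sq_dist, sq_dist. ring. }
  rewrite HPstar. split.
  - apply min_power_at_mean_optimal; assumption.
  - intros P x. apply optimal_eq_min_power_at_mean; assumption.
Qed.
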